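(* Let $\hat{\boldsymbol\mu}$ be a location estimator, assigning to every $n\times d$ data matrix a vector in $\mathbb R^d$, which is orthogonally equivariant: for all $\boldsymbol v\in\mathbb R^d$, all $d\times d$ orthogonal matrices $\boldsymbol A$ and all $n\times d$ data matrices $\boldsymbol X$, $\hat{\boldsymbol\mu}(\boldsymbol 1_n\boldsymbol v^{\top}+\boldsymbol X\boldsymbol A)=\boldsymbol v+\boldsymbol A^{\top}\hat{\boldsymbol\mu}(\boldsymbol X)$. Then whenever all rows of a data matrix $\boldsymbol X$ lie in a lower-dimensional affine subspace of $\mathbb R^d$, $\hat{\boldsymbol\mu}(\boldsymbol X)$ lies in that subspace as well. Consequently, for every $n\times d$ data matrix $\boldsymbol X$, $\varepsilon^*_n(\hat{\boldsymbol\mu},\boldsymbol X)\leqslant \lceil n/d\rceil/n$.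
   Context: Rows of the $n\times d$ data matrix are the data points; $\boldsymbol 1_n$ is the $n\times1$ vector of ones. For an integer $m\ge0$, $\boldsymbol X^m$ denotes any matrix obtained from $\boldsymbol X$ by replacing at most $m$ cells in each column by arbitrary real values. The finite-sample cellwise breakdown value is $\varepsilon^*_n(\hat{\boldsymbol\mu},\boldsymbol X)=\min\{\tfrac{m}{n}:\ \sup_{\boldsymbol X^m}\|\hat{\boldsymbol\mu}(\boldsymbol X^m)-\hat{\boldsymbol\mu}(\boldsymbol X)\|=\infty\}$. *)

From HB Require Import structures.
From mathcomp Require Import all_boot all_order all_algebra.
From mathcomp Require Import boolp classical_sets reals.
Set Implicit Arguments. Unset Strict Implicit. Unset Printing Implicit Defensive.
Import Order.TTheory GRing.Theory Num.Theory.
Local Open Scope ring_scope.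
Local Open Scope classical_set_scope.

(* Data matrices are 'M[R]_(n, d) (rows = data points); location estimates
   are row vectors 'rV[R]_d (the transpose of the paper's column vectors). *)

Definition orthogonal_mx (R : realType) (d : nat) (A : 'M[R]_d) : Prop :=
  A *m A^T = 1%:M.

(* Orthogonal equivariance  mu(1_n v^T + X A) = v + A^T mu(X),
   written with row vectors: mu(1_n v + X A) = v + mu(X) A. *)
Definition orth_equivariant (R : realType) (n d : nat)
    (mu : 'M[R]_(n, d) -> 'rV[R]_d) : Prop :=
  forall (v : 'rV[R]_d) (A : 'M[R]_d) (X : 'M[R]_(n, d)),
    orthogonal_mx A ->
    mu ((const_mx 1 : 'cV[R]_n) *m v + X *m A) = v + mu X *m A.

Definition in_affine (R : realType) (d : nat) (a : 'rV[R]_d) (U : 'M[R]_d)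
    (x : 'rV[R]_d) : bool := (x - a <= U)%MS.

Definition enorm (R : realType) (d : nat) (x : 'rV[R]_d) : R :=
  Num.sqrt (\sum_(j < d) x 0 j ^+ 2).

Definition cell_contam (R : realType) (n d : nat) (m : nat)
    (X Y : 'M[R]_(n, d)) : bool :=
  [forall j : 'I_d, #|[set i : 'I_n | Y i j != X i j]| <= m]%N.

Definition breaks_down (R : realType) (n d : nat)
    (mu : 'M[R]_(n, d) -> 'rV[R]_d) (X : 'M[R]_(n, d)) (m : nat) : Prop :=
  forall M : R, exists Y : 'M[R]_(n, d),
    cell_contam m X Y /\ M < enorm (mu Y - mu X).

(* Finite-sample cellwise breakdown value: min { m/n : breaks_down m }
   (the set is nonempty and finite-valued, so the infimum is this minimum). *)
Definition cell_breakdown (R : realType) (n d : nat)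
    (mu : 'M[R]_(n, d) -> 'rV[R]_d) (X : 'M[R]_(n, d)) : R :=
  inf [set (m%:R / n%:R : R) | m in [set m : nat | breaks_down mu X m]].

From HB Require Import structures.
From mathcomp Require Import all_boot all_order all_algebra.
From mathcomp Require Import boolp classical_sets reals ring zify.
Set Implicit Arguments. Unset Strict Implicit. Unset Printing Implicit Defensive.
Import Order.TTheory GRing.Theory Num.Theory.
Local Open Scope ring_scope.

(* If the rows of X lie in a + <U>, then for every w orthogonal to U the
   Householder reflection A along w satisfies 1 (a - a A) + X A = X, so
   equivariance gives mu X = (a - a A) + (mu X) A: the vector mu X - a is
   fixed by A, i.e. orthogonal to w.  Being orthogonal to the orthogonal
   complement of U, it lies in <U>.
   For the breakdown bound, send row i to column i / ceil(n/d) and overwrite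
   that one cell so that the row sums to b; each column loses at most
   ceil(n/d) cells.  The contaminated rows then lie in the hyperplane
   sum_j x_j = b, hence so does the estimate, which therefore moves by at
   least (b - sum_j mu(X)_j) / d. *)

Lemma sub_orthogonal_complement (F : fieldType) (m d : nat)
    (U : 'M[F]_(m, d)) (y : 'rV[F]_d) :
  (forall w : 'rV[F]_d, w *m U^T = 0 -> y *m w^T = 0) -> (y <= U)%MS.
Proof.
move=> yU; set K := kermx U^T.
have yK : y *m K^T = 0.
  apply: trmx_inj; rewrite trmx_mul trmxK trmx0.
  apply/row_matrixP => i; rewrite row_mul row0 -[row i K]trmxK -trmx_mul.
  by rewrite yU ?trmx0 // -row_mul mulmx_ker row0.
have sUKK : (U <= kermx K^T)%MS.
  by apply/sub_kermxP; rewrite -[U]trmxK -trmx_mul mulmx_ker trmx0.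
have rankKK : \rank (kermx K^T) = \rank U.
  by rewrite mxrank_ker mxrank_tr mxrank_ker mxrank_tr subKn ?rank_leq_col.
have sKKU : (kermx K^T <= U)%MS.
  by case: (mxrank_leqif_sup sUKK) => _ <-; rewrite rankKK.
by apply: submx_trans sKKU; apply/sub_kermxP.
Qed.

Section Householder.
Variables (R : realFieldType) (d : nat).
Implicit Types w y : 'rV[R]_d.

Lemma dot_self_eq0 w : ((w *m w^T) 0 0 == 0) = (w == 0).
Proof.
rewrite mxE psumr_eq0 => [|j _]; last by rewrite mxE -expr2 sqr_ge0.
apply/allP/eqP => [w0 | ->]; last by move=> j _; rewrite !mxE mul0r eqxx.
apply/matrixP => i j; rewrite ord1 mxE.
by move/implyP: (w0 j (mem_index_enum j)) => /(_ isT); rewrite mxE mulf_eq0 orbb => /eqP.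
Qed.

(* For [w = 0] the junk value [2 / 0 = 0] makes this the identity. *)
Definition householder w : 'M[R]_d :=
  1%:M - (2 / (w *m w^T) 0 0) *: (w^T *m w).

Lemma mulmx_householder y w :
  y *m householder w = y - (2 / (w *m w^T) 0 0 * (y *m w^T) 0 0) *: w.
Proof.
rewrite /householder mulmxBr mulmx1 -scalemxAr mulmxA.
by rewrite {1}[y *m w^T]mx11_scalar mul_scalar_mx scalerA.
Qed.

Lemma householder_fixedE y w : (y *m householder w == y) = (y *m w^T == 0).
Proof.
rewrite mulmx_householder -subr_eq0 addrAC subrr add0r oppr_eq0 scaler_eq0.
have [-> | w0] := eqVneq w 0; first by rewrite !trmx0 !mulmx0 orbT eqxx.
rewrite orbF mulf_eq0 mulf_eq0 invr_eq0 dot_self_eq0 (negbTE w0) pnatr_eq0 /=.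
by apply/eqP/eqP => [a0 | ->]; [apply/rowP => i; rewrite ord1 a0 mxE | rewrite mxE].
Qed.

Lemma householder_tr w : (householder w)^T = householder w.
Proof. by rewrite /householder linearB /= linearZ /= trmx_mul trmxK trmx1. Qed.

Lemma householder_orthogonal w : householder w *m (householder w)^T = 1%:M.
Proof.
have [-> | w0] := eqVneq w 0.
  by rewrite /householder !trmx0 !(mul0mx, mulmx0) scaler0 subr0 trmx1 mulmx1.
rewrite householder_tr /householder.
set s := (w *m w^T) 0 0; set P := w^T *m w.
have s0 : s != 0 by rewrite dot_self_eq0.
have PP : P *m P = s *: P.
  by rewrite mulmxA -(mulmxA w^T) [w *m w^T]mx11_scalar mul_mx_scalar -scalemxAl.
rewrite mulmxBl !mulmxBr !mul1mx !mulmx1 -!scalemxAl -!scalemxAr PP !scalerA.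
by apply/matrixP => i j; rewrite !mxE; field.
Qed.
End Householder.

Lemma row_ones_mul (R : ringType) (n d : nat) (v : 'rV[R]_d) (i : 'I_n) :
  row i ((const_mx 1 : 'cV[R]_n) *m v) = v.
Proof. by apply/rowP => j; rewrite row_mul row_const !mxE big_ord1 !mxE mul1r. Qed.

Lemma orth_equivariant_affine (R : realType) (n d : nat)
    (mu : 'M[R]_(n, d) -> 'rV[R]_d) (X : 'M[R]_(n, d)) (a : 'rV[R]_d)
    (U : 'M[R]_d) :
  orth_equivariant mu ->
  (forall i : 'I_n, in_affine a U (row i X)) -> in_affine a U (mu X).
Proof.
move=> Hmu HX; apply: sub_orthogonal_complement => w wU.
set A := householder w.
have rowA (x : 'rV[R]_d) : in_affine a U x -> (a - a *m A) + x *m A = x.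
  case/submxP=> D xa.
  have : (x - a) *m w^T == 0.
    by rewrite xa -mulmxA -[U *m w^T]trmxK trmx_mul trmxK wU trmx0 mulmx0.
  rewrite -householder_fixedE mulmxBl subr_eq => /eqP ->.
  by rewrite addrACA subrKC addNr addr0.
have fixX : (const_mx 1 : 'cV[R]_n) *m (a - a *m A) + X *m A = X.
  by apply/row_matrixP => i; rewrite linearD /= row_ones_mul row_mul rowA.
have := Hmu (a - a *m A) A X (householder_orthogonal w); rewrite fixX => muX.
apply/eqP; rewrite -householder_fixedE mulmxBl {2}muX.
by rewrite addrAC (addrAC a) subrr add0r addrC.
Qed.

Lemma coord_sum_le_enorm (R : realType) (d : nat) (z : 'rV[R]_d) :
  \sum_j z 0 j <= d%:R * enorm z.
Proof.
have coord_le (j : 'I_d) : z 0 j <= enorm z.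
  rewrite (le_trans (ler_norm _)) // /enorm -sqrtr_sqr ler_sqrt ?sumr_ge0 //.
    by rewrite (bigD1 j) //= lerDl sumr_ge0 // => k _; rewrite sqr_ge0.
  by move=> k _; rewrite sqr_ge0.
rewrite mulr_natl -[X in _ *+ X]card_ord -sumr_const.
by apply: ler_sum => j _.
Qed.

Lemma in_affine_coord_sum (R : realType) (d : nat) (b : R) (v : 'rV[R]_d) :
  (0 < d)%N ->
  in_affine ((b / d%:R) *: const_mx 1) (kermx (const_mx 1 : 'cV[R]_d)) v
  = (\sum_j v 0 j == b).
Proof.
move=> d_gt0; rewrite /in_affine sub_kermx.
have -> : (v - (b / d%:R) *: const_mx 1) *m const_mx 1 = (\sum_j v 0 j - b)%:M.
  apply/rowP => k; rewrite ord1 !mxE.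
  under eq_bigr do rewrite !mxE mulr1.
  rewrite sumrB sumr_const card_ord mulr1 eqxx mulr1n -(mulr_natr (b / _)) divfK //.
  by rewrite pnatr_eq0 -lt0n.
by rewrite -scalemx1 scaler_eq0 oner_eq0 orbF subr_eq0.
Qed.

Section RowSumContamination.
Variables (R : realType) (n d : nat).

Definition force_row_sums (g : 'I_n -> 'I_d) (b : R) (X : 'M[R]_(n, d)) :
    'M[R]_(n, d) :=
  \matrix_(i, j) if g i == j then b - \sum_(k | k != j) X i k else X i j.

Lemma row_sum_force_row_sums g b X (i : 'I_n) :
  \sum_j force_row_sums g b X i j = b.
Proof.
rewrite (bigD1 (g i)) //= mxE eqxx.
under eq_bigr => k /negbTE kg do rewrite mxE eq_sym kg.
by rewrite subrK.
Qed.

Lemma cell_contam_force_row_sums (m : nat) g b X :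
  (forall j : 'I_d, #|[set i | g i == j]| <= m)%N ->
  cell_contam m X (force_row_sums g b X).
Proof.
move=> gm; apply/forallP => j; apply: leq_trans (gm j).
apply/subset_leq_card/fintype.subsetP => i; rewrite !inE /= mxE.
by case: (g i == j); rewrite ?eqxx.
Qed.

End RowSumContamination.

Lemma card_divn_fiber (n m k : nat) :
  (0 < m)%N -> (#|[set i : 'I_n | i %/ m == k]| <= m)%N.
Proof.
move=> m_gt0; pose r (i : 'I_n) : 'I_m := Ordinal (ltn_pmod i m_gt0).
rewrite -(card_in_imset (f := r)).
  by rewrite -[leqRHS]card_ord max_card.
move=> i i'; rewrite !inE => /eqP ik /eqP i'k [] imod.
by apply/val_inj; rewrite /= (divn_eq i m) (divn_eq i' m) ik i'k imod.
Qed.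

Lemma balanced_column_assignment (n d : nat) :
  (0 < n)%N -> (0 < d)%N ->
  exists g : 'I_n -> 'I_d,
    forall j : 'I_d, (#|[set i | g i == j]| <= (n + d - 1) %/ d)%N.
Proof.
move=> n_gt0 d_gt0; set m := ((n + d - 1) %/ d)%N.
have m_gt0 : (0 < m)%N by rewrite /m; lia.
have lt_d (i : 'I_n) : (i %/ m < d)%N.
  by rewrite ltn_divLR //; have := ltn_ord i; rewrite /m; lia.
by exists (fun i => Ordinal (lt_d i)) => j; apply: card_divn_fiber.
Qed.

Lemma breaks_down_ceil (R : realType) (n d : nat)
    (mu : 'M[R]_(n, d) -> 'rV[R]_d) (X : 'M[R]_(n, d)) :
  orth_equivariant mu -> (0 < n)%N -> (0 < d)%N ->
  breaks_down mu X ((n + d - 1) %/ d).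
Proof.
move=> Hmu n_gt0 d_gt0 M.
have [g g_bal] := balanced_column_assignment n_gt0 d_gt0.
pose b := d%:R * (`|M| + 1) + \sum_j mu X 0 j.
pose Y := force_row_sums g b X.
exists Y; split; first exact: cell_contam_force_row_sums.
have sum_muY : \sum_j mu Y 0 j = b.
  apply/eqP; rewrite -(in_affine_coord_sum _ _ d_gt0).
  apply: orth_equivariant_affine Hmu _ => i; rewrite in_affine_coord_sum //.
  by under eq_bigr do rewrite mxE; rewrite row_sum_force_row_sums.
have : d%:R * (`|M| + 1) <= d%:R * enorm (mu Y - mu X).
  apply: le_trans (coord_sum_le_enorm _).
  by under eq_bigr do rewrite !mxE; rewrite sumrB sum_muY addrK.
rewrite ler_pM2l ?ltr0n // => le_enorm.
by apply: lt_le_trans le_enorm; rewrite (le_lt_trans (ler_norm M)) ?ltrDl.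
Qed.

Theorem corollary1 (R : realType) (n d : nat) (hn : (0 < n)%N) (hd : (0 < d)%N)
    (mu : 'M[R]_(n, d) -> 'rV[R]_d) (Hmu : orth_equivariant mu) :
  (forall (X : 'M[R]_(n, d)) (a : 'rV[R]_d) (U : 'M[R]_d),
     (\rank U < d)%N ->
     (forall i : 'I_n, in_affine a U (row i X)) ->
     in_affine a U (mu X))
  /\
  (forall X : 'M[R]_(n, d),
     cell_breakdown mu X <= (divn (n + d - 1) d)%:R / n%:R).
Proof.
split=> [X a U _ | X]; first exact: orth_equivariant_affine.
apply: ge_inf; last by exists ((n + d - 1) %/ d)%N => //; exact: breaks_down_ceil.
by exists 0 => _ [m _ <-]; rewrite divr_ge0 ?ler0n.
Qed.
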